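(* Let $u(x,y):=\frac13(y^3-x^3)$ for $(x,y)\in(-1,1)^2$, and let $X$ be the gradient flow $X'(t,x,y)=\nabla u(X(t,x,y))$, $X(0,x,y)=(x,y)$. i) In the open set $\Omega=(0,1)\times(-1,0)$ (resp. $(-1,0)\times(0,1)$), the point $(0,0)$ is positively (resp. negatively) stable for this flow. However, $\nabla u$ is not isotropically realizable in $\Omega$ (i.e. there is no solution of $\mathrm{div}(\sigma\nabla u)=0$ in $\Omega$) with any positive conductivity $\sigma\in C^1(\Omega)\cap L^\infty(\Omega)$. ii) In the open set $\Omega=(0,1)^2$ or $(-1,0)^2$, the point $(0,0)$ is not stable. Moreover, $\nabla u$ is isotropically realizable in $\Omega$ with some positive conductivity $\sigma_0\in C^1(\Omega)\cap L^\infty(\Omega)$. However, $\nabla u$ is not realizable in $\Omega$ with any positive conductivity $\sigma\in C^1(\Omega)\cap L^\infty(\Omega)$ such that $\sigma^{-1}\in L^\infty(\Omega)$.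
   Context: $(0,0)$ is the unique critical point of $u$ in $(-1,1)^2$ and $\nabla^2u(0,0)=0$ (non-hyperbolic). A critical point $x_*$ is positively (resp. negatively) stable in the considered region if there are a compact neighborhood $K_*$ of $x_*$ containing no other critical point and a neighborhood $Q_*\subset\mathrm{int}(K_* )$ of $x_*$ such that $X(t,x)\in K_*$ for all $x\in Q_*$ and all $t\ge0$ (resp. all $t\le0$). *)

From Stdlib Require Import Reals List.
From Coquelicot Require Import Coquelicot.
Open Scope R_scope.

Definition pt := (R * R)%type.

Definition box (p : pt) : Prop := -1 < fst p < 1 /\ -1 < snd p < 1.

Definition u (p : pt) : R := (snd p ^ 3 - fst p ^ 3) / 3.

Definition grad (f : pt -> R) (p : pt) : pt :=
  (Derive (fun x => f (x, snd p)) (fst p), Derive (fun y => f (fst p, y)) (snd p)).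

Definition div (F : pt -> pt) (p : pt) : R :=
  Derive (fun x => fst (F (x, snd p))) (fst p) + Derive (fun y => snd (F (fst p, y))) (snd p).

Definition is_critical (p : pt) : Prop := box p /\ grad u p = (0, 0).

Definition compact2 (K : pt -> Prop) : Prop :=
  forall (I : Type) (U : I -> pt -> Prop),
    (forall i, open (U i)) ->
    (forall p, K p -> exists i, U i p) ->
    exists l : list I, forall p, K p -> exists i, In i l /\ U i p.

Definition flow_sol (g : R -> pt) (p : pt) (t : R) : Prop :=
  g 0 = p /\
  forall s, (0 <= s <= t \/ t <= s <= 0) ->
    box (g s) /\ is_derive g s (grad u (g s)).

(* "X(t,p) is defined and X(t,p) \in K" *)
Definition flow_in (K : pt -> Prop) (p : pt) (t : R) : Prop :=
  (exists g, flow_sol g p t) /\ (forall g, flow_sol g p t -> K (g t)).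

Definition origin : pt := (0, 0).

Definition stable_dir (dir : bool) (Omega : pt -> Prop) : Prop :=
  exists (K Q : pt -> Prop),
    compact2 K /\ locally origin K /\
    (forall q, K q -> is_critical q -> q = origin) /\
    locally origin Q /\ (forall q, Q q -> locally q K) /\
    forall q t, Q q -> Omega q ->
      (if dir then 0 <= t else t <= 0) -> flow_in K q t.

Definition pos_stable := stable_dir true.
Definition neg_stable := stable_dir false.
Definition stable (Omega : pt -> Prop) : Prop := pos_stable Omega \/ neg_stable Omega.

Definition C1_on (Omega : pt -> Prop) (sigma : pt -> R) : Prop :=
  forall p, Omega p ->
    continuous sigma p /\
    ex_derive (fun x => sigma (x, snd p)) (fst p) /\
    ex_derive (fun y => sigma (fst p, y)) (snd p) /\
    continuous (fun q => Derive (fun x => sigma (x, snd q)) (fst q)) p /\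
    continuous (fun q => Derive (fun y => sigma (fst q, y)) (snd q)) p.

Definition admissible (Omega : pt -> Prop) (sigma : pt -> R) : Prop :=
  C1_on Omega sigma /\ (forall p, Omega p -> 0 < sigma p) /\
  (exists M, forall p, Omega p -> Rabs (sigma p) <= M).

Definition inv_bounded (Omega : pt -> Prop) (sigma : pt -> R) : Prop :=
  exists M, forall p, Omega p -> Rabs (/ sigma p) <= M.

Definition realizes (Omega : pt -> Prop) (sigma : pt -> R) : Prop :=
  forall p, Omega p ->
    div (fun q => (sigma q * fst (grad u q), sigma q * snd (grad u q))) p = 0.

Definition Omega_pn (p : pt) : Prop := 0 < fst p < 1 /\ -1 < snd p < 0.
Definition Omega_np (p : pt) : Prop := -1 < fst p < 0 /\ 0 < snd p < 1.
Definition Omega_pp (p : pt) : Prop := 0 < fst p < 1 /\ 0 < snd p < 1.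
Definition Omega_nn (p : pt) : Prop := -1 < fst p < 0 /\ -1 < snd p < 0.

(* Each coordinate of the gradient flow X' = (-x^2, y^2) solves a Riccati equation, and a
   Gronwall argument shows the explicit solution x / (1 + x t), y / (1 - y t) is the only one.
   In (0,1) x (-1,0) both denominators are >= 1 for t >= 0, so trajectories shrink towards the
   origin (symmetrically for t <= 0 in (-1,0) x (0,1)); on the diagonal of (0,1)^2 or (-1,0)^2
   one denominator vanishes at time +-1/e, so points arbitrarily close to the origin leave
   every compact set.
   For a conductivity sigma, div (sigma grad u) = 0 is the transport equation
   -x^2 sigma_x + y^2 sigma_y = 2 (x - y) sigma, whose characteristics are the flow lines
   1/x + 1/y = const, and along them sigma x^2 y^2 is constant.  On the antidiagonal this forces
   sigma ~ x^-4, contradicting boundedness; in (0,1)^2 the characteristic through (1/2, 1/(c-2))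
   reaches (2/c, 2/c), and for large c the lower bound at the first point and the upper bound
   at the second are incompatible.  Choosing sigma x^2 y^2 = (xy/(x+y))^4 gives the bounded
   realizing conductivity sigma0. *)

From Stdlib Require Import Reals Lra Psatz List Classical ClassicalEpsilon.
From Coquelicot Require Import Coquelicot.
Open Scope R_scope.

Lemma grad_u (p : pt) : grad u p = (- fst p ^ 2, snd p ^ 2).
Proof.
  unfold grad, u; simpl; f_equal; apply is_derive_unique; auto_derive; auto; field.
Qed.

Lemma is_derive_fst (g : R -> pt) s l :
  is_derive g s l -> is_derive (fun t => fst (g t)) s (fst l).
Proof.
  intros Hg; eapply filterdiff_ext_lin.
  - exact (filterdiff_comp g fst _ fst Hg (filterdiff_linear _ is_linear_fst)).
  - reflexivity.
Qed.

Lemma is_derive_snd (g : R -> pt) s l :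
  is_derive g s l -> is_derive (fun t => snd (g t)) s (snd l).
Proof.
  intros Hg; eapply filterdiff_ext_lin.
  - exact (filterdiff_comp g snd _ snd Hg (filterdiff_linear _ is_linear_snd)).
  - reflexivity.
Qed.

Lemma is_derive_pair (f g : R -> R) s a b :
  is_derive f s a -> is_derive g s b ->
  is_derive (fun t => (f t, g t) : pt) s (a, b).
Proof.
  intros Hf Hg; eapply filterdiff_ext_lin.
  - apply (filterdiff_comp'_2 f g (fun x y => (x, y)) s _ _ (fun x y => (x, y)) Hf Hg).
    apply filterdiff_ext_lin with (l1 := fun y => y).
    + eapply filterdiff_ext; [|apply filterdiff_id]; intros [x y]; reflexivity.
    + intros [x y]; reflexivity.
  - reflexivity.
Qed.

(** * Uniqueness for the gradient flow *)

Definition between0 (t s : R) : Prop := 0 <= s <= t \/ t <= s <= 0.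

Lemma between0_trans t s r : between0 t s -> between0 s r -> between0 t r.
Proof. unfold between0; lra. Qed.

Lemma gronwall_forward (V a : R -> R) (L s : R) :
  0 <= s ->
  (forall r, 0 <= r <= s -> is_derive V r (a r * V r) /\ a r <= L /\ 0 <= V r) ->
  V 0 = 0 -> V s = 0.
Proof.
  intros Hs HV V0.
  (* [W] is nonnegative, nonincreasing on [0, s] and vanishes at 0. *)
  set (W r := V r * exp (- L * r)).
  assert (HW : forall r, 0 <= r <= s -> is_derive W r ((a r - L) * W r)).
  { intros r Hr; destruct (HV r Hr) as [Hd _]; unfold W.
    auto_derive; [exists (a r * V r); exact Hd|].
    replace (Derive (fun x : R => V x) r) with (a r * V r)
      by (symmetry; exact (is_derive_unique V r _ Hd)); ring. }
  destruct (MVT_gen W 0 s (fun r => (a r - L) * W r)) as [c [Hc Hmvt]].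
  - intros r Hr; rewrite Rmin_left, Rmax_right in Hr by lra; apply HW; lra.
  - intros r Hr; rewrite Rmin_left, Rmax_right in Hr by lra.
    apply continuity_pt_filterlim, (ex_derive_continuous W r).
    eexists; apply HW; exact Hr.
  - rewrite Rmin_left, Rmax_right in Hc by lra.
    destruct (HV c Hc) as [_ [HaL _]]; destruct (HV s ltac:(lra)) as [_ [_ HVs]].
    assert (Hexp : forall r, 0 < exp (- L * r)) by (intros; apply exp_pos).
    assert (0 <= W c) by (apply Rmult_le_pos; [apply HV; lra | left; apply Hexp]).
    assert (HW0 : W 0 = 0) by (unfold W; rewrite V0; ring).
    assert ((a c - L) * W c <= 0) by nra.
    assert (W s <= 0) by (rewrite HW0 in Hmvt; nra).
    assert (0 <= V s * exp (- L * s)) by (apply Rmult_le_pos; [lra | left; apply Hexp]).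
    specialize (Hexp s); unfold W in *; nra.
Qed.

Lemma gronwall_zero (V a : R -> R) (L s : R) :
  (forall r, between0 s r -> is_derive V r (a r * V r) /\ Rabs (a r) <= L /\ 0 <= V r) ->
  V 0 = 0 -> V s = 0.
Proof.
  intros HV V0; destruct (Rle_dec 0 s) as [Hs | Hs].
  - apply (gronwall_forward V a L s Hs); [|exact V0].
    intros r Hr; destruct (HV r ltac:(left; lra)) as [Hd [Ha HVr]].
    apply Rabs_le_between in Ha; split; [exact Hd | lra].
  - replace s with (- - s) by ring.
    apply (gronwall_forward (fun r => V (- r)) (fun r => - a (- r)) L (- s));
      [lra | | rewrite Ropp_0; exact V0].
    intros r Hr; destruct (HV (- r) ltac:(right; lra)) as [Hd [Ha HVr]].
    apply Rabs_le_between in Ha; split; [|lra].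
    replace (- a (- r) * V (- r)) with (scal (-1) (a (- r) * V (- r)))
      by (unfold scal; simpl; unfold mult; simpl; ring).
    apply (is_derive_comp V Ropp r); [exact Hd|].
    auto_derive; auto; ring.
Qed.

Lemma riccati_solution_eq (z : R -> R) (k B t : R) :
  (forall s, between0 t s -> Rabs (z s) <= B /\ is_derive z s (k * z s ^ 2)) ->
  forall s, between0 t s -> z s * (1 - k * z 0 * s) = z 0.
Proof.
  intros Hz s Hs.
  (* [w' = k z w], so [w ^ 2] satisfies a linear equation with bounded coefficient. *)
  set (w r := z r * (1 - k * z 0 * r) - z 0).
  assert (Hw : w s ^ 2 = 0).
  { apply (gronwall_zero (fun r => w r ^ 2) (fun r => 2 * k * z r) (2 * Rabs k * B) s);
      [|unfold w; ring].
    intros r Hr; destruct (Hz r (between0_trans t s r Hs Hr)) as [HzB Hd].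
    split; [|split; [|apply pow2_ge_0]].
    - unfold w; auto_derive; [exists (k * z r ^ 2); exact Hd|].
      replace (Derive (fun x : R => z x) r) with (k * z r ^ 2)
        by (symmetry; exact (is_derive_unique z r _ Hd)); ring.
    - rewrite !Rabs_mult, (Rabs_right 2) by lra.
      pose proof (Rabs_pos k); nra. }
  unfold w in Hw; nra.
Qed.

Lemma flow_sol_fst g q t : flow_sol g q t ->
  forall s, between0 t s -> fst (g s) * (1 + fst q * s) = fst q.
Proof.
  intros [H0 Hg] s Hs; rewrite <- H0.
  replace (1 + fst (g 0) * s) with (1 - -1 * fst (g 0) * s) by ring.
  apply (riccati_solution_eq (fun r => fst (g r)) (-1) 1 t); [|exact Hs].
  intros r Hr; destruct (Hg r Hr) as [[Hb _] Hd]; split; [apply Rabs_le; lra|].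
  replace (-1 * fst (g r) ^ 2) with (fst (grad u (g r))) by (rewrite grad_u; simpl; ring).
  exact (is_derive_fst g r _ Hd).
Qed.

Lemma flow_sol_snd g q t : flow_sol g q t ->
  forall s, between0 t s -> snd (g s) * (1 - snd q * s) = snd q.
Proof.
  intros [H0 Hg] s Hs; rewrite <- H0.
  replace (1 - snd (g 0) * s) with (1 - 1 * snd (g 0) * s) by ring.
  apply (riccati_solution_eq (fun r => snd (g r)) 1 1 t); [|exact Hs].
  intros r Hr; destruct (Hg r Hr) as [[_ Hb] Hd]; split; [apply Rabs_le; lra|].
  replace (1 * snd (g r) ^ 2) with (snd (grad u (g r))) by (rewrite grad_u; simpl; ring).
  exact (is_derive_snd g r _ Hd).
Qed.

Lemma flow_sol_no_blowup g q t : flow_sol g q t -> fst q <> 0 -> snd q <> 0 ->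
  (1 + fst q * t) * (1 - snd q * t) <> 0.
Proof.
  intros Hg Hx Hy Hzero.
  assert (Ht : between0 t t) by (unfold between0; lra).
  pose proof (flow_sol_fst g q t Hg t Ht); pose proof (flow_sol_snd g q t Hg t Ht).
  destruct (Rmult_integral _ _ Hzero) as [E | E]; rewrite E in *; lra.
Qed.

Definition flow_explicit (q : pt) (s : R) : pt :=
  (fst q / (1 + fst q * s), snd q / (1 - snd q * s)).

Lemma Rabs_le_of_mul_ge1 z d x : 1 <= d -> z * d = x -> Rabs z <= Rabs x.
Proof.
  intros Hd <-; rewrite Rabs_mult, (Rabs_right d) by lra.
  pose proof (Rabs_pos z); nra.
Qed.

Lemma flow_sol_explicit q t : box q ->
  (forall s, between0 t s -> 1 <= 1 + fst q * s /\ 1 <= 1 - snd q * s) ->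
  flow_sol (flow_explicit q) q t.
Proof.
  intros [Hx Hy] Hshrink; split; [unfold flow_explicit; destruct q; simpl; f_equal; field|].
  intros s Hs; destruct (Hshrink s Hs) as [Gx Gy].
  assert (Ax : Rabs (fst q / (1 + fst q * s)) <= Rabs (fst q))
    by (apply (Rabs_le_of_mul_ge1 _ (1 + fst q * s)); [lra | field; lra]).
  assert (Ay : Rabs (snd q / (1 - snd q * s)) <= Rabs (snd q))
    by (apply (Rabs_le_of_mul_ge1 _ (1 - snd q * s)); [lra | field; lra]).
  assert (Rabs (fst q) < 1) by (apply Rabs_def1; lra).
  assert (Rabs (snd q) < 1) by (apply Rabs_def1; lra).
  split.
  - unfold box, flow_explicit; simpl; split; apply Rabs_lt_between; lra.
  - rewrite grad_u; simpl; apply is_derive_pair; auto_derive; try lra; field; lra.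
Qed.

(** * Stability of the origin *)

Definition rect (a1 b1 a2 b2 : R) (p : pt) : Prop := a1 < fst p < b1 /\ a2 < snd p < b2.
Definition closed_rect (a1 b1 a2 b2 : R) (p : pt) : Prop :=
  a1 <= fst p <= b1 /\ a2 <= snd p <= b2.

Lemma open_rect a1 b1 a2 b2 : open (rect a1 b1 a2 b2).
Proof.
  assert (Hint : forall a b, open (fun x : R => a < x < b))
    by (intros a b; exact (open_and _ _ (open_gt a) (open_lt b))).
  apply open_and;
    [apply (open_comp fst (fun x => a1 < x < b1)) | apply (open_comp snd (fun y => a2 < y < b2))];
    try apply Hint; intros [x y] _; [apply continuous_fst | apply continuous_snd].
Qed.

Lemma compact2_closed_rect a1 b1 a2 b2 : compact2 (closed_rect a1 b1 a2 b2).
Proof.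
  intros I U HU Hcov; set (K := closed_rect a1 b1 a2 b2).
  destruct (classic (inhabited I)) as [[i0] | HI]; cycle 1.
  { exists nil; intros p Hp; destruct (Hcov p Hp) as [i _]; exfalso; exact (HI (inhabits i)). }
  assert (Hgauge : forall p : pt, exists ie : I * posreal,
             K p -> forall q, ball p (snd ie) q -> U (fst ie) q).
  { intros p; destruct (classic (K p)) as [Hp | Hp].
    - destruct (Hcov p Hp) as [i Hi]; destruct (HU i p Hi) as [e He].
      exists (i, e); intros _; exact He.
    - exists (i0, mkposreal 1 Rlt_0_1); tauto. }
  set (gauge p := proj1_sig (constructive_indefinite_description _ (Hgauge p))).
  assert (Hg : forall p, K p -> forall q, ball p (snd (gauge p)) q -> U (fst (gauge p)) q)
    by (intros p; exact (proj2_sig (constructive_indefinite_description _ (Hgauge p)))).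
  set (to_pt (t : Compactness.Tn 2 R) := (fst t, fst (snd t)) : pt).
  apply NNPP; intro Hno.
  apply (compactness_list 2 (a1, (a2, tt)) (b1, (b2, tt)) (fun t => snd (gauge (to_pt t)))).
  intros [l Hl]; apply Hno.
  exists (map (fun t => fst (gauge (to_pt t))) l); intros p Hp.
  destruct (Hl (fst p, (snd p, tt))) as [t [Hin [Hb Hc]]];
    [simpl; unfold K, closed_rect in Hp; tauto|].
  exists (fst (gauge (to_pt t))); split; [exact (in_map (fun t => fst (gauge (to_pt t))) _ _ Hin)|].
  destruct t as [x [y []]]; apply Hg.
  - unfold K, closed_rect, to_pt; simpl in *; tauto.
  - simpl in Hc; split; [exact (proj1 Hc) | exact (proj1 (proj2 Hc))].
Qed.

Lemma is_critical_origin q : is_critical q -> q = origin.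
Proof.
  destruct q as [x y]; intros [_ Hc]; rewrite grad_u in Hc; simpl in Hc.
  injection Hc as Ex Ey; unfold origin; f_equal; nra.
Qed.

Lemma stable_dir_of_shrinking (dir : bool) (Omega : pt -> Prop) :
  (forall q s, Omega q -> (if dir then 0 <= s else s <= 0) ->
     1 <= 1 + fst q * s /\ 1 <= 1 - snd q * s) ->
  stable_dir dir Omega.
Proof.
  intros Hshrink.
  exists (closed_rect (-1/2) (1/2) (-1/2) (1/2)), (rect (-1/4) (1/4) (-1/4) (1/4)).
  split; [apply compact2_closed_rect|].
  split; [apply (filter_imp (rect (-1/2) (1/2) (-1/2) (1/2)));
          [unfold rect, closed_rect; intros; lra | apply open_rect; unfold rect, origin; simpl; lra]|].
  split; [intros q _; apply is_critical_origin|].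
  split; [apply open_rect; unfold rect, origin; simpl; lra|].
  split; [intros q Hq; apply (filter_imp (rect (-1/2) (1/2) (-1/2) (1/2)));
          [unfold rect, closed_rect; intros; lra | apply open_rect; unfold rect in *; lra]|].
  intros q t Hq HOm Ht.
  assert (Hs : forall s, between0 t s -> 1 <= 1 + fst q * s /\ 1 <= 1 - snd q * s).
  { intros s Hs; apply (Hshrink q s HOm); destruct dir; unfold between0 in Hs; lra. }
  destruct Hq as [Hqx Hqy]; split.
  - exists (flow_explicit q); apply flow_sol_explicit; [unfold box; lra | exact Hs].
  - intros g Hg.
    assert (Ht' : between0 t t) by (unfold between0; lra).
    destruct (Hs t Ht') as [Gx Gy].
    assert (Ax := Rabs_le_of_mul_ge1 _ _ _ Gx (flow_sol_fst g q t Hg t Ht')).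
    assert (Ay := Rabs_le_of_mul_ge1 _ _ _ Gy (flow_sol_snd g q t Hg t Ht')).
    assert (Rabs (fst q) < 1/4) by (apply Rabs_def1; lra).
    assert (Rabs (snd q) < 1/4) by (apply Rabs_def1; lra).
    assert (Bx : Rabs (fst (g t)) <= 1/2) by lra; assert (By : Rabs (snd (g t)) <= 1/2) by lra.
    apply Rabs_le_between in Bx; apply Rabs_le_between in By; unfold closed_rect; lra.
Qed.

Lemma locally_origin_diagonal (Q : pt -> Prop) s : locally origin Q -> (s = 1 \/ s = -1) ->
  exists e, 0 < e < 1 /\ Q (s * e, s * e).
Proof.
  intros [eps HQ] Hs; pose proof (cond_pos eps).
  set (e := Rmin (eps / 2) (1 / 2)).
  assert (e <= eps / 2 /\ e <= 1 / 2) by (split; [apply Rmin_l | apply Rmin_r]).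
  assert (0 < e) by (apply Rmin_glb_lt; lra).
  exists e; split; [lra|]; apply HQ.
  split; change (Rabs (s * e - 0) < eps); apply Rabs_lt_between; destruct Hs as [-> | ->]; lra.
Qed.

(* Along the diagonal one coordinate of the flow blows up at time ±1/e, in either time direction. *)
Lemma not_stable_dir_of_diagonal (dir : bool) (Omega : pt -> Prop) s :
  (s = 1 \/ s = -1) -> (forall e, 0 < e < 1 -> Omega (s * e, s * e)) -> ~ stable_dir dir Omega.
Proof.
  intros Hs HOm (K & Q & _ & _ & _ & HQ & _ & Hflow).
  destruct (locally_origin_diagonal Q s HQ Hs) as [e [He HQe]].
  assert (0 < / e) by (apply Rinv_0_lt_compat; lra).
  set (t := if dir then / e else - / e).
  destruct (Hflow (s * e, s * e) t HQe (HOm e He)) as [[g Hg] _]; [unfold t; destruct dir; lra|].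
  apply (flow_sol_no_blowup g _ t Hg); simpl; [destruct Hs; nra | destruct Hs; nra |].
  unfold t; destruct dir, Hs as [-> | ->]; field; lra.
Qed.

Lemma not_stable_of_diagonal (Omega : pt -> Prop) s :
  (s = 1 \/ s = -1) -> (forall e, 0 < e < 1 -> Omega (s * e, s * e)) -> ~ stable Omega.
Proof.
  intros Hs HOm [H | H];
    [exact (not_stable_dir_of_diagonal true Omega s Hs HOm H)
    | exact (not_stable_dir_of_diagonal false Omega s Hs HOm H)].
Qed.

(** * Realizability by an isotropic conductivity *)

Definition flux (sigma : pt -> R) (q : pt) : pt :=
  (sigma q * fst (grad u q), sigma q * snd (grad u q)).

Definition Dx (sigma : pt -> R) (p : pt) : R := Derive (fun x => sigma (x, snd p)) (fst p).
Definition Dy (sigma : pt -> R) (p : pt) : R := Derive (fun y => sigma (fst p, y)) (snd p).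

Lemma div_flux (sigma : pt -> R) (p : pt) :
  ex_derive (fun x => sigma (x, snd p)) (fst p) -> ex_derive (fun y => sigma (fst p, y)) (snd p) ->
  div (flux sigma) p
  = - fst p ^ 2 * Dx sigma p + snd p ^ 2 * Dy sigma p - 2 * (fst p - snd p) * sigma p.
Proof.
  intros Hx Hy; unfold div, Dx, Dy.
  rewrite (Derive_ext (fun x => fst (flux sigma (x, snd p))) (fun x => sigma (x, snd p) * - x ^ 2))
    by (intros x; unfold flux; rewrite grad_u; reflexivity).
  rewrite (Derive_ext (fun y => snd (flux sigma (fst p, y))) (fun y => sigma (fst p, y) * y ^ 2))
    by (intros y; unfold flux; rewrite grad_u; reflexivity).
  rewrite !Derive_mult by (auto; auto_derive; auto).
  replace (Derive (fun x => - x ^ 2) (fst p)) with (- (2 * fst p))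
    by (symmetry; apply is_derive_unique; auto_derive; auto; ring).
  replace (Derive (fun y => y ^ 2) (snd p)) with (2 * snd p)
    by (symmetry; apply is_derive_unique; auto_derive; auto; ring).
  destruct p; simpl; ring.
Qed.

Lemma transport_eq (Omega : pt -> Prop) (sigma : pt -> R) (p : pt) :
  C1_on Omega sigma -> realizes Omega sigma -> Omega p ->
  - fst p ^ 2 * Dx sigma p + snd p ^ 2 * Dy sigma p = 2 * (fst p - snd p) * sigma p.
Proof.
  intros HC HR Hp; destruct (HC p Hp) as [_ [Hx [Hy _]]].
  pose proof (HR p Hp) as Hdiv; change (div (flux sigma) p = 0) in Hdiv.
  rewrite div_flux in Hdiv by assumption; lra.
Qed.

Lemma realizes_of_transport (Omega : pt -> Prop) (sigma : pt -> R) :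
  (forall p, Omega p ->
     ex_derive (fun x => sigma (x, snd p)) (fst p) /\ ex_derive (fun y => sigma (fst p, y)) (snd p) /\
     - fst p ^ 2 * Dx sigma p + snd p ^ 2 * Dy sigma p = 2 * (fst p - snd p) * sigma p) ->
  realizes Omega sigma.
Proof.
  intros Ht p Hp; destruct (Ht p Hp) as [Hx [Hy Heq]].
  change (div (flux sigma) p = 0); rewrite div_flux by assumption; lra.
Qed.

Lemma C1_differentiable (Omega : pt -> Prop) (sigma : pt -> R) (p : pt) :
  open Omega -> C1_on Omega sigma -> Omega p ->
  differentiable_pt_lim (fun a b => sigma (a, b)) (fst p) (snd p) (Dx sigma p) (Dy sigma p).
Proof.
  intros HO HC Hp; apply filterdiff_differentiable_pt_lim.
  destruct (HC p Hp) as [_ [_ [Hy [Hcx _]]]].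
  destruct p as [x y]; eapply filterdiff_ext_lin.
  - apply (is_derive_filterdiff (fun a b => sigma (a, b)) x y
             (fun a b => Derive (fun z => sigma (z, b)) a) (Dy sigma (x, y))); [| |exact Hcx].
    + apply (filter_imp Omega); [|exact (HO _ Hp)].
      intros [a b] Hab; apply Derive_correct; exact (proj1 (proj2 (HC _ Hab))).
    + apply Derive_correct; exact Hy.
  - intros [a b]; reflexivity.
Qed.

Definition weight (sigma : pt -> R) (p : pt) : R := sigma p * fst p ^ 2 * snd p ^ 2.

Lemma weight_is_derive_along_grad (Omega : pt -> Prop) (sigma : pt -> R)
    (g1 g2 : R -> R) (k a : R) :
  open Omega -> C1_on Omega sigma -> realizes Omega sigma -> Omega (g1 a, g2 a) ->
  is_derive g1 a (k * - g1 a ^ 2) -> is_derive g2 a (k * g2 a ^ 2) ->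
  is_derive (fun t => weight sigma (g1 t, g2 t)) a 0.
Proof.
  intros HO HC HR Hp H1 H2.
  pose proof (transport_eq Omega sigma _ HC HR Hp) as Ht; cbn [fst snd] in Ht.
  pose (S t := sigma (g1 t, g2 t)).
  assert (HS : is_derive S a (k * (2 * (g1 a - g2 a) * S a))).
  { unfold S at 2; rewrite <- Ht.
    replace (k * _) with (Dx sigma (g1 a, g2 a) * (k * - g1 a ^ 2)
                          + Dy sigma (g1 a, g2 a) * (k * g2 a ^ 2)) by ring.
    apply is_derive_Reals, (derivable_pt_lim_comp_2d (fun x y => sigma (x, y)) g1 g2 a).
    - exact (C1_differentiable Omega sigma _ HO HC Hp).
    - apply is_derive_Reals; exact H1.
    - apply is_derive_Reals; exact H2. }
  change (is_derive (fun t => S t * g1 t ^ 2 * g2 t ^ 2) a 0).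
  auto_derive; [repeat split; eexists; eassumption|].
  replace (Derive (fun x : R => S x) a) with (k * (2 * (g1 a - g2 a) * S a))
    by (symmetry; exact (is_derive_unique S a _ HS)).
  replace (Derive (fun x : R => g1 x) a) with (k * - g1 a ^ 2)
    by (symmetry; exact (is_derive_unique g1 a _ H1)).
  replace (Derive (fun x : R => g2 x) a) with (k * g2 a ^ 2)
    by (symmetry; exact (is_derive_unique g2 a _ H2)).
  ring.
Qed.

(* The characteristic curves [1/x + 1/y = c/s], traversed by the gradient flow at speed [1/s]. *)
Definition char_curve (s c a : R) : pt := (s / a, s / (c - a)).

Lemma weight_const_on_char (Omega : pt -> Prop) (sigma : pt -> R) (s c a1 a2 : R) :
  open Omega -> C1_on Omega sigma -> realizes Omega sigma -> s <> 0 -> a1 <= a2 ->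
  (forall a, a1 <= a <= a2 -> a <> 0 /\ c - a <> 0 /\ Omega (char_curve s c a)) ->
  weight sigma (char_curve s c a2) = weight sigma (char_curve s c a1).
Proof.
  intros HO HC HR Hs H12 Hcurve.
  assert (Hd : forall a, a1 <= a <= a2 ->
                 is_derive (fun t => weight sigma (char_curve s c t)) a 0).
  { intros a Ha; destruct (Hcurve a Ha) as [Ha0 [Hca HOa]].
    apply (weight_is_derive_along_grad Omega sigma (fun t => s / t) (fun t => s / (c - t)) (/ s) a
             HO HC HR HOa); auto_derive; auto; field; auto. }
  destruct (MVT_gen (fun t => weight sigma (char_curve s c t)) a1 a2 (fun _ => 0)) as [x [_ Hx]];
    rewrite ?Rmin_left, ?Rmax_right by lra.
  - intros a Ha; apply Hd; lra.
  - intros a Ha; apply continuity_pt_filterlim.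
    apply (ex_derive_continuous (fun t => weight sigma (char_curve s c t)) a).
    eexists; apply Hd; exact Ha.
  - lra.
Qed.

Lemma weight_char_curve (sigma : pt -> R) (s c a : R) : a <> 0 -> c - a <> 0 ->
  weight sigma (char_curve s c a) = sigma (char_curve s c a) * s ^ 4 / (a ^ 2 * (c - a) ^ 2).
Proof. intros Ha Hca; unfold weight; unfold char_curve at 2 3; simpl; field; auto. Qed.

Lemma not_realizable_of_antidiagonal (Omega : pt -> Prop) (sigma : pt -> R) (s : R) :
  (s = 1 \/ s = -1) -> open Omega -> (forall x, 0 < x < 1 -> Omega (s * x, - (s * x))) ->
  admissible Omega sigma -> ~ realizes Omega sigma.
Proof.
  intros Hs HO Hdiag [HC [Hpos [M HM]]] HR.
  assert (Hs4 : s ^ 4 = 1) by (destruct Hs as [-> | ->]; ring).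
  assert (Hcurve : forall a, 2 <= a -> a <> 0 /\ 0 - a <> 0 /\ Omega (char_curve s 0 a)).
  { intros a Ha; do 2 (split; [lra|]).
    replace (char_curve s 0 a) with (s * / a, - (s * / a))
      by (unfold char_curve; f_equal; field; lra).
    apply Hdiag; split; [apply Rinv_0_lt_compat; lra|].
    rewrite <- Rinv_1; apply Rinv_lt_contravar; lra. }
  assert (Hbound : forall a, 2 <= a -> 0 < sigma (char_curve s 0 a) <= M).
  { intros a Ha; destruct (Hcurve a Ha) as [_ [_ Hp]]; pose proof (HM _ Hp) as HMp.
    pose proof (Hpos _ Hp); rewrite Rabs_right in HMp by lra; lra. }
  set (s2 := sigma (char_curve s 0 2)).
  destruct (Hbound 2 (Rle_refl 2)) as [Hs2 HM2]; fold s2 in Hs2, HM2.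
  (* Constancy of the weight forces [sigma] to grow like [a ^ 4] along the antidiagonal. *)
  set (A := 2 + 16 * M / s2).
  assert (0 <= 16 * M / s2) by (apply Rdiv_le_0_compat; lra).
  assert (HA : 2 <= A) by (unfold A; lra).
  pose proof (weight_const_on_char Omega sigma s 0 2 A HO HC HR ltac:(destruct Hs; lra) HA
                (fun a Ha => Hcurve a (proj1 Ha))) as Heq.
  rewrite !weight_char_curve, Hs4 in Heq by lra; fold s2 in Heq.
  assert (HsA : sigma (char_curve s 0 A) = s2 * A ^ 4 / 16).
  { replace (sigma (char_curve s 0 A))
      with (sigma (char_curve s 0 A) * 1 / (A ^ 2 * (0 - A) ^ 2) * (A ^ 2 * (0 - A) ^ 2))
      by (field; lra).
    rewrite Heq; field. }
  destruct (Hbound A HA) as [_ HMA]; rewrite HsA in HMA.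
  assert (4 <= A ^ 2) by nra; assert (8 <= A ^ 3) by nra; assert (8 * A <= A ^ 4) by nra.
  assert (s2 * A = 2 * s2 + 16 * M) by (unfold A; field; lra).
  nra.
Qed.

Lemma quartic_dominates (P c : R) : 0 <= P -> P + 4 <= c -> P * (c - 2) ^ 2 < c ^ 4.
Proof.
  intros HP Hc.
  assert ((c - 2) ^ 2 < c ^ 2) by nra.
  assert (P < c ^ 2) by nra.
  assert (P * (c - 2) ^ 2 <= P * c ^ 2) by nra.
  nra.
Qed.

Lemma not_realizable_of_diagonal (Omega : pt -> Prop) (sigma : pt -> R) (s : R) :
  (s = 1 \/ s = -1) -> open Omega ->
  (forall x y, 0 < x < 1 -> 0 < y < 1 -> Omega (s * x, s * y)) ->
  admissible Omega sigma -> inv_bounded Omega sigma -> ~ realizes Omega sigma.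
Proof.
  intros Hs HO Hsq [HC [Hpos [M HM]]] [M' HM'] HR.
  assert (Hs4 : s ^ 4 = 1) by (destruct Hs as [-> | ->]; ring).
  assert (Hbounds : forall p, Omega p -> sigma p <= M /\ 1 <= sigma p * M').
  { intros p Hp; pose proof (Hpos p Hp); pose proof (HM p Hp); pose proof (HM' p Hp).
    rewrite Rabs_right in * by (try left; try apply Rinv_0_lt_compat; lra).
    split; [lra|]. replace 1 with (sigma p * / sigma p) by (field; lra).
    apply Rmult_le_compat_l; lra. }
  assert (Hhalf : Omega (s * / 2, s * / 2)) by (apply Hsq; lra).
  destruct (Hbounds _ Hhalf) as [HM0 HM'0]; pose proof (Hpos _ Hhalf).
  (* Join a point near the axis to a point near the origin by a characteristic curve. *)
  set (c := 4 + 64 * M * M').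
  assert (Hc : 64 * M * M' + 4 <= c) by (unfold c; lra).
  assert (0 <= M') by nra; assert (0 <= 64 * M * M') by nra.
  assert (Hinv : forall b, 2 <= b -> 0 < / b < 1)
    by (intros b Hb; split;
        [apply Rinv_0_lt_compat | rewrite <- Rinv_1; apply Rinv_lt_contravar]; lra).
  assert (Hcurve : forall a, 2 <= a <= c / 2 -> a <> 0 /\ c - a <> 0 /\ Omega (char_curve s c a)).
  { intros a Ha; do 2 (split; [lra|]); apply Hsq; apply Hinv; lra. }
  pose proof (weight_const_on_char Omega sigma s c 2 (c / 2) HO HC HR
                ltac:(destruct Hs; lra) ltac:(lra) Hcurve) as Heq.
  rewrite !weight_char_curve, Hs4 in Heq by lra.
  destruct (Hcurve 2 ltac:(lra)) as [_ [_ Hp1]]; destruct (Hcurve (c / 2) ltac:(lra)) as [_ [_ Hp2]].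
  destruct (Hbounds _ Hp1) as [_ Hlow]; destruct (Hbounds _ Hp2) as [Hup _].
  set (s1 := sigma (char_curve s c 2)) in *; set (s2 := sigma (char_curve s c (c / 2))) in *.
  assert (E : c ^ 4 * s1 = 64 * s2 * (c - 2) ^ 2).
  { replace (c ^ 4 * s1) with (c ^ 4 * (2 ^ 2 * (c - 2) ^ 2) * (s1 * 1 / (2 ^ 2 * (c - 2) ^ 2)))
      by (field; lra).
    rewrite <- Heq; field; lra. }
  assert (0 < c ^ 4) by (apply pow_lt; lra).
  assert (c ^ 4 <= c ^ 4 * s1 * M') by nra.
  assert (s2 * M' * (c - 2) ^ 2 <= M * M' * (c - 2) ^ 2)
    by (apply Rmult_le_compat_r; [nra | apply Rmult_le_compat_r; lra]).
  assert (c ^ 4 * s1 * M' = 64 * (s2 * M' * (c - 2) ^ 2)) by (rewrite E; ring).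
  pose proof (quartic_dominates (64 * M * M') c); lra.
Qed.

Lemma continuity_2d_pt_pow (f : R -> R -> R) (n : nat) (x y : R) :
  continuity_2d_pt f x y -> continuity_2d_pt (fun u v => f u v ^ n) x y.
Proof.
  intros Hf; induction n as [|n IH]; simpl;
    [apply continuity_2d_pt_const | exact (continuity_2d_pt_mult _ _ _ _ Hf IH)].
Qed.

Lemma continuous_of_continuity_2d (f : R -> R -> R) (p : pt) :
  continuity_2d_pt f (fst p) (snd p) -> continuous (fun q : pt => f (fst q) (snd q)) p.
Proof. destruct p as [x y]; apply continuity_2d_pt_filterlim. Qed.

Ltac continuity_2d :=
  unfold Rdiv; repeat first
    [ apply continuity_2d_pt_pow | apply continuity_2d_pt_inv | apply continuity_2d_pt_mult
    | apply continuity_2d_pt_minus | apply continuity_2d_pt_plus | apply continuity_2d_pt_opp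
    | apply continuity_2d_pt_id1 | apply continuity_2d_pt_id2 | apply continuity_2d_pt_const ].

(* [sigma0 = F (1/x + 1/y) / (x y) ^ 2] with [F c = c ^ -4], so its weight is constant on
   each characteristic. *)
Definition sigma0 (p : pt) : R := (fst p * snd p) ^ 2 / (fst p + snd p) ^ 4.

Definition sigma0_dx (x y : R) : R := 2 * x * y ^ 2 * (y - x) / (x + y) ^ 5.
Definition sigma0_dy (x y : R) : R := 2 * x ^ 2 * y * (x - y) / (x + y) ^ 5.

Lemma is_derive_sigma0_x (x y : R) :
  x + y <> 0 -> is_derive (fun t => sigma0 (t, y)) x (sigma0_dx x y).
Proof.
  intros H; unfold sigma0, sigma0_dx; cbn [fst snd]; auto_derive;
    [repeat apply Rmult_integral_contrapositive_currified; auto; lra | field; auto].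
Qed.

Lemma is_derive_sigma0_y (x y : R) :
  x + y <> 0 -> is_derive (fun t => sigma0 (x, t)) y (sigma0_dy x y).
Proof.
  intros H; unfold sigma0, sigma0_dy; cbn [fst snd]; auto_derive;
    [repeat apply Rmult_integral_contrapositive_currified; auto; lra | field; auto].
Qed.

Lemma sigma0_realizes (Omega : pt -> Prop) :
  open Omega -> (forall q, Omega q -> 0 < fst q * snd q) ->
  admissible Omega sigma0 /\ realizes Omega sigma0.
Proof.
  intros HO Hxy.
  assert (Hsum : forall q, Omega q -> fst q + snd q <> 0)
    by (intros q Hq E; specialize (Hxy q Hq); replace (snd q) with (- fst q) in Hxy by lra; nra).
  assert (Hpow : forall q n, Omega q -> (fst q + snd q) ^ n <> 0)
    by (intros; apply pow_nonzero, Hsum; auto).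
  assert (Hdx : forall q, Omega q -> Dx sigma0 q = sigma0_dx (fst q) (snd q))
    by (intros q Hq; apply is_derive_unique, is_derive_sigma0_x, Hsum, Hq).
  assert (Hdy : forall q, Omega q -> Dy sigma0 q = sigma0_dy (fst q) (snd q))
    by (intros q Hq; apply is_derive_unique, is_derive_sigma0_y, Hsum, Hq).
  split; [split; [|split]|].
  - intros p Hp; split; [|split; [|split; [|split]]].
    + apply (continuous_of_continuity_2d (fun x y => (x * y) ^ 2 / (x + y) ^ 4)).
      continuity_2d; apply Hpow, Hp.
    + eexists; apply is_derive_sigma0_x, Hsum, Hp.
    + eexists; apply is_derive_sigma0_y, Hsum, Hp.
    + apply (continuous_ext_loc _ (fun q : pt => sigma0_dx (fst q) (snd q))).
      * apply (filter_imp Omega); [intros q Hq; symmetry; apply Hdx, Hq | exact (HO p Hp)].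
      * apply (continuous_of_continuity_2d sigma0_dx); unfold sigma0_dx.
        continuity_2d; apply Hpow, Hp.
    + apply (continuous_ext_loc _ (fun q : pt => sigma0_dy (fst q) (snd q))).
      * apply (filter_imp Omega); [intros q Hq; symmetry; apply Hdy, Hq | exact (HO p Hp)].
      * apply (continuous_of_continuity_2d sigma0_dy); unfold sigma0_dy.
        continuity_2d; apply Hpow, Hp.
  - intros [x y] Hp; pose proof (Hxy _ Hp); pose proof (Hsum _ Hp).
    unfold sigma0; cbn [fst snd] in *.
    assert (0 < (x + y) ^ 2) by (apply pow2_gt_0; assumption).
    apply Rdiv_lt_0_compat; nra.
  - exists 1; intros [x y] Hp; pose proof (Hxy _ Hp); pose proof (Hsum _ Hp).
    unfold sigma0; cbn [fst snd] in *.
    assert (0 < (x + y) ^ 2) by (apply pow2_gt_0; assumption).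
    assert (H4 : 0 < (x + y) ^ 4) by nra.
    assert ((x * y) ^ 2 <= (x + y) ^ 4) by (assert (x * y <= (x + y) ^ 2) by nra; nra).
    rewrite Rabs_right by (apply Rle_ge, Rdiv_le_0_compat; nra).
    apply (Rdiv_le_1 _ _ H4); assumption.
  - apply realizes_of_transport; intros p Hp; rewrite Hdx, Hdy by exact Hp.
    split; [eexists; apply is_derive_sigma0_x, Hsum, Hp|].
    split; [eexists; apply is_derive_sigma0_y, Hsum, Hp|].
    unfold sigma0, sigma0_dx, sigma0_dy; field; exact (Hsum p Hp).
Qed.

Theorem proposition4p1 :
  (pos_stable Omega_pn /\ neg_stable Omega_np /\
   (forall sigma, admissible Omega_pn sigma -> ~ realizes Omega_pn sigma) /\
   (forall sigma, admissible Omega_np sigma -> ~ realizes Omega_np sigma)) /\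
  (forall Omega : pt -> Prop, (Omega = Omega_pp \/ Omega = Omega_nn) ->
     ~ stable Omega /\
     (exists sigma0, admissible Omega sigma0 /\ realizes Omega sigma0) /\
     (forall sigma, admissible Omega sigma -> inv_bounded Omega sigma ->
        ~ realizes Omega sigma)).
Proof.
  split; [split; [|split; [|split]] | intros Omega [-> | ->]; (split; [|split])].
  - apply stable_dir_of_shrinking; intros q s [Hx Hy] Hs; split; nra.
  - apply stable_dir_of_shrinking; intros q s [Hx Hy] Hs; split; nra.
  - intros sigma; apply (not_realizable_of_antidiagonal _ _ 1);
      [now left | exact (open_rect 0 1 (-1) 0) | intros x Hx; split; simpl; lra].
  - intros sigma; apply (not_realizable_of_antidiagonal _ _ (-1));
      [now right | exact (open_rect (-1) 0 0 1) | intros x Hx; split; simpl; lra].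
  - apply (not_stable_of_diagonal _ 1); [now left | intros e He; split; simpl; lra].
  - exists sigma0; apply sigma0_realizes; [exact (open_rect 0 1 0 1) | intros q [Hx Hy]; nra].
  - intros sigma; apply (not_realizable_of_diagonal _ _ 1);
      [now left | exact (open_rect 0 1 0 1) | intros x y Hx Hy; split; simpl; lra].
  - apply (not_stable_of_diagonal _ (-1)); [now right | intros e He; split; simpl; lra].
  - exists sigma0; apply sigma0_realizes; [exact (open_rect (-1) 0 (-1) 0) | intros q [Hx Hy]; nra].
  - intros sigma; apply (not_realizable_of_diagonal _ _ (-1));
      [now right | exact (open_rect (-1) 0 (-1) 0) | intros x y Hx Hy; split; simpl; lra].
Qed.
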